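(* Let $\mathcal{D}=(X,\mathcal{B})$ be a $(v,k,\lambda)$ symmetric design of order $q=k-\lambda\geq 2$. Then there exists a semi-resolving set for the points of $\mathcal{D}$ of size $\left\lceil \frac{v\log v}{k-\lambda}\right\rceil$, i.e. a set $S_\mathcal{B}\subseteq\mathcal{B}$ of this size such that for every pair of distinct points $x,y\in X$ some block $B\in S_\mathcal{B}$ satisfies $d(x,B)\neq d(y,B)$ in the incidence graph of $\mathcal{D}$ (equivalently, $B$ contains exactly one of $x,y$).
   Context: A symmetric design with parameters $(v,k,\lambda)$ is a pair $(X,\mathcal{B})$ where $X$ is a set of $v$ points and $\mathcal{B}$ is a family of $k$-subsets of $X$ (blocks) such that any two distinct points lie in exactly $\lambda$ blocks and any two distinct blocks meet in exactly $\lambda$ points. Its order is $q=k-\lambda$. The incidence graph is the bipartite graph on $X\cup\mathcal{B}$ with $x$ adjacent to $B$ iff $x\in B$; $d$ is graph distance. $\log$ denotes the natural logarithm. *)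

From mathcomp Require Import all_boot.
From Stdlib Require Import Reals.

Set Implicit Arguments.
Unset Strict Implicit.
Unset Printing Implicit Defensive.

Definition symmetric_design (X : finType) (Bs : {set {set X}}) (v k lam : nat) : Prop :=
  [/\ #|X| = v, #|Bs| = v,
      (forall B, B \in Bs -> #|B| = k),
      (forall x y : X, x != y -> #|[set B in Bs | (x \in B) && (y \in B)]| = lam)
    & (forall B C, B \in Bs -> C \in Bs -> B != C -> #|B :&: C| = lam)].

(* Vertices of the incidence graph: points (inl) and sets of points (inr);
   only sets that are blocks get edges. *)
Definition ivertex (X : finType) := (X + {set X})%type.

Definition iadj (X : finType) (Bs : {set {set X}}) (u w : ivertex X) : bool :=
  match u, w with
  | inl x, inr B => (B \in Bs) && (x \in B)
  | inr B, inl x => (B \in Bs) && (x \in B)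
  | _, _ => false
  end.

Fixpoint iwalk (X : finType) (Bs : {set {set X}}) (n : nat) (u w : ivertex X) : bool :=
  match n with
  | 0 => u == w
  | n'.+1 => [exists z, iadj Bs u z && iwalk Bs n' z w]
  end.

(* Graph distance: least n with a walk of length n (any shortest walk has
   length < #|ivertex X|); unreachable pairs get the value #|ivertex X|,
   which plays the role of infinity (it differs from every finite distance). *)
Definition idist (X : finType) (Bs : {set {set X}}) (u w : ivertex X) : nat :=
  find (fun n => iwalk Bs n u w) (iota 0 #|{: ivertex X}|).

Definition semi_resolving_points (X : finType) (Bs S : {set {set X}}) : Prop :=
  S \subset Bs /\
  forall x y : X, x != y ->
    exists2 B, B \in S & idist Bs (inl x) (inr B) <> idist Bs (inl y) (inr B).

Definition is_ceil (r : R) (n : nat) : Prop := (INR n - 1 < r)%R /\ (r <= INR n)%R.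

(* Two distinct points are separated (lie in exactly one of the two blocks) by exactly
   2q blocks, q = k - lam.  Adding blocks greedily, an averaging argument gives a block that
   separates at least a 2q/v fraction of the ordered pairs not yet separated, so after N
   steps at most v(v - 1)(1 - 2q/v)^N < v^2 e^(-2qN/v) <= 1 pairs remain once
   N >= v log v / q.  There are enough blocks for this because v <= q^2 + q + 1 <= e^q, and
   in the incidence graph a point is at distance 1 exactly from the blocks containing it. *)

From mathcomp Require Import all_boot.
From Stdlib Require Import Reals Lra Lia Psatz.
(* [Reals] rebinds [^] in [nat_scope] to [Nat.pow]; re-importing [ssrnat] restores [expn]. *)
From mathcomp Require Import ssrnat zify.

Set Implicit Arguments.
Unset Strict Implicit.
Unset Printing Implicit Defensive.

Section RealEstimates.
Local Open Scope R_scope.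

Lemma exp_pow (x : R) (n : nat) : exp x ^ n = exp (INR n * x).
Proof. by rewrite -Rpower_pow ?/Rpower ?ln_exp //; apply: exp_pos. Qed.

Lemma exp_le_exp (x y : R) : x <= y -> exp x <= exp y.
Proof. by case=> [/exp_increasing/Rlt_le | ->]; [| apply: Rle_refl]. Qed.

Lemma ln_le_of_le_exp (x y : R) : 0 < x -> x <= exp y -> ln x <= y.
Proof.
move=> x_gt0 le_x_ey; apply: Rnot_lt_le => /exp_increasing.
rewrite exp_ln //; lra.
Qed.

Lemma seven_le_exp2 : 7 <= exp 2.
Proof.
(* e^2 = 7.389..., so the estimate must be sharp: (21/20)^40 = 7.039... *)
have -> : 2 = INR 40 * (1 / 20) by rewrite /=; lra.
rewrite -exp_pow.
have base : 0 <= 21 / 20 <= exp (1 / 20) by have := exp_ineq1_le (1 / 20); lra.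
by have := pow_incr _ _ 40 base; rewrite /=; lra.
Qed.

Lemma INR_sqr_add_succ_le_exp (n : nat) : (2 <= n)%N -> INR (n * n + n + 1)%N <= exp (INR n).
Proof.
elim: n => // n IH; rewrite ltnS leq_eqVlt => /predU1P [<- | n_gt1].
  by rewrite (_ : INR 2 = 2) /=; have := seven_le_exp2; lra.
have step : INR (n.+1 * n.+1 + n.+1 + 1)%N <= 2 * INR (n * n + n + 1)%N.
  by rewrite (_ : 2 = INR 2) // -mult_INR; apply/le_INR/leP; nia.
rewrite S_INR exp_plus.
have := IH n_gt1; have := exp_ineq1_le 1; have := pos_INR (n * n + n + 1)%N; nra.
Qed.

Lemma ln_le_of_le_sqr_add_succ (v q : nat) :
  (0 < v)%N -> (2 <= q)%N -> (v <= q * q + q + 1)%N -> ln (INR v) <= INR q.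
Proof.
move=> v_gt0 q_ge2 v_le; apply: ln_le_of_le_exp; first exact/lt_0_INR/ltP.
exact/(Rle_trans _ _ _ (le_INR _ _ (elimT leP v_le)))/INR_sqr_add_succ_le_exp.
Qed.

Lemma is_ceil_Zceil (r : R) : 0 <= r -> is_ceil r (Z.to_nat (Zceil r)).
Proof.
move=> r_ge0; have [lo hi] := Zceil_bound r.
have z_ge0 : (0 <= Zceil r)%Z by apply: le_IZR; lra.
by rewrite /is_ceil INR_IZR_INZ Znat.Z2Nat.id.
Qed.

Lemma exists_ceil_le (r : R) (v : nat) :
  0 <= r -> r <= INR v -> exists2 N, is_ceil r N & (N <= v)%N.
Proof.
move=> r_ge0 r_le_v; have ceilN := is_ceil_Zceil r_ge0.
exists (Z.to_nat (Zceil r)) => //; case: ceilN => lo _.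
by apply/leP/Nat.lt_succ_r/INR_lt; rewrite S_INR; lra.
Qed.

Lemma mul_ln_div_bounds (v q : nat) : (0 < v)%N -> (0 < q)%N -> ln (INR v) <= INR q ->
  0 <= INR v * ln (INR v) / INR q <= INR v.
Proof.
move=> v_gt0 q_gt0 ln_le.
have v_ge1 : 1 <= INR v by apply: (le_INR 1); apply/leP.
have q_pos : 0 < INR q by apply/lt_0_INR/ltP.
have ln_ge0 : 0 <= ln (INR v).
  by apply: Rnot_lt_le => /exp_increasing; rewrite exp_ln ?exp_0; lra.
split; first by apply: Rmult_le_pos; [nra | apply/Rlt_le/Rinv_0_lt_compat].
apply: (Rmult_le_reg_r (INR q)) => //.
rewrite /Rdiv Rmult_assoc Rinv_l; [nra | lra].
Qed.

Lemma pow_one_sub_le_exp (a : R) (n : nat) : a <= 1 -> (1 - a) ^ n <= exp (- (a * INR n)).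
Proof.
move=> a_le1; rewrite (_ : - (a * INR n) = INR n * - a) -?exp_pow; last ring.
by apply: pow_incr; have := exp_ineq1_le (- a); lra.
Qed.

Lemma INR_expn (m n : nat) : INR (m ^ n)%N = INR m ^ n.
Proof. by elim: n => // n IH; rewrite expnS mult_INR IH. Qed.

Lemma mul_pred_expn_sub_lt_expn (v q N : nat) : (0 < q)%N -> (2 * q <= v)%N ->
  INR v * ln (INR v) / INR q <= INR N -> (v * (v - 1) * (v - 2 * q) ^ N < v ^ N)%N.
Proof.
move=> q_gt0 le_2q_v le_N.
have v_pos : 0 < INR v by apply/lt_0_INR/ltP; lia.
have q_pos : 0 < INR q by apply/lt_0_INR/ltP.
(* With a = 2q/v: (1 - a)^N <= e^(-aN) <= e^(-2 ln v) = v^-2. *)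
set a := 2 * INR q / INR v.
have a_ge0 : 0 <= a by apply/Rmult_le_pos/Rlt_le/Rinv_0_lt_compat; lra.
have def_sub : INR (v - 2 * q) = INR v * (1 - a).
  by rewrite minus_INR ?mult_INR /a /=; [field; lra | apply/leP].
have a_le1 : a <= 1 by have := pos_INR (v - 2 * q); rewrite def_sub; nra.
have le_aN : 2 * ln (INR v) <= a * INR N.
  have := Rmult_le_compat_l a _ _ a_ge0 le_N.
  by rewrite (_ : a * _ = 2 * ln (INR v)); [lra | rewrite /a; field; lra].
have v_ge1 : 1 <= INR v by apply: (le_INR 1); apply/leP; lia.
have vv_inv : INR v * INR v * / (INR v * INR v) = 1 by apply: Rinv_r; nra.
have vv_inv_pos : 0 < / (INR v * INR v) by apply: Rinv_0_lt_compat; nra.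
have decay : (1 - a) ^ N <= / (INR v * INR v).
  apply: Rle_trans (pow_one_sub_le_exp N a_le1) _.
  rewrite -[/ _]exp_ln // ln_Rinv ?ln_mult; try nra.
  by apply: exp_le_exp; lra.
have pairs_decay : INR v * (INR v - 1) * (1 - a) ^ N < 1.
  apply: Rle_lt_trans (Rmult_le_compat_l _ _ _ _ decay) _; first nra.
  by rewrite -vv_inv; apply: Rmult_lt_compat_r; nra.
apply/ltP/INR_lt; rewrite !mult_INR !INR_expn def_sub minus_INR; last by apply/leP; lia.
rewrite Rpow_mult_distr; have := pow_lt _ N v_pos; rewrite [INR 1]/=; nra.
Qed.

End RealEstimates.

Lemma double_count (I J : finType) (P : pred I) (Q : pred J) (r : I -> J -> bool) :
  \sum_(i | P i) #|[set j | Q j && r i j]| = \sum_(j | Q j) #|[set i | P i && r i j]|.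
Proof.
rewrite (eq_bigr (fun i => \sum_(j | Q j && r i j) 1)) => [|i _]; last by rewrite sum1dep_card.
rewrite [RHS](eq_bigr (fun j => \sum_(i | P i && r i j) 1)) => [|j _]; last by rewrite sum1dep_card.
rewrite (exchange_big_dep Q) => [|i j _ /andP[] //].
by apply: eq_bigr => j Qj; apply: eq_bigl => i; rewrite Qj.
Qed.

Lemma exists_ge_average (T : finType) (A : {set T}) (f : T -> nat) :
  0 < #|A| -> exists2 a, a \in A & \sum_(i in A) f i <= #|A| * f a.
Proof.
case/card_gt0P=> a0 Aa0; have [a Aa max_a] := arg_maxnP f Aa0.
by exists a => //; rewrite -sum_nat_const; apply: leq_sum.
Qed.

Lemma idist_point_block_eq1 (X : finType) (Bs : {set {set X}}) (x : X) (B : {set X}) :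
  B \in Bs -> (idist Bs (inl x) (inr B) == 1) = (x \in B).
Proof.
move=> BsB.
have walk1 : iwalk Bs 1 (inl x) (inr B) = (x \in B).
  apply/existsP/idP => [[z /andP[adj_xz /eqP eq_zB]] | xB].
    by move: adj_xz; rewrite eq_zB /= BsB.
  by exists (inr B); rewrite /= BsB xB eqxx.
have : 1 < #|{: ivertex X}|.
  by rewrite card_sum; apply: (@leq_add 1 1); apply/card_gt0P; [exists x | exists B].
rewrite /idist; case: #|_| => [|[|n]] // _.
by move: walk1 => /= ->; case: (x \in B).
Qed.

Definition separates (X : finType) (B : {set X}) (p : X * X) := (p.1 \in B) != (p.2 \in B).

Definition unresolved (X : finType) (S : {set {set X}}) : {set X * X} :=
  [set p | (p.1 != p.2) && [forall B in S, ~~ separates B p]].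

Lemma card_unresolved0 (X : finType) : #|unresolved (set0 : {set {set X}})| = #|X| * (#|X| - 1).
Proof.
have -> : unresolved set0 = ~: [set (x, x) | x : X].
  apply/setP => -[x y]; rewrite !inE /=.
  have -> : [forall B in set0, ~~ separates B (x, y)] by apply/forall_inP => B; rewrite inE.
  rewrite andbT; congr (~~ _); apply/eqP/imsetP => [-> | [z _ [-> ->]] //].
  by exists y.
have := cardsC [set (x, x) | x : X].
rewrite card_imset => [|x y [] //]; rewrite card_prod mulnBr muln1 => <-.
by rewrite addKn.
Qed.

Lemma unresolved_setU1 (X : finType) (B : {set X}) (S : {set {set X}}) :
  unresolved (B |: S) = [set p in unresolved S | ~~ separates B p].
Proof.
apply/setP => p; rewrite !inE -andbA; congr (_ && _).
apply/forall_inP/andP => [sepU | [/forall_inP sepS sepB] C].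
  by split; [apply/forall_inP => C SC | ]; apply: sepU; rewrite !inE ?SC ?orbT ?eqxx.
by rewrite !inE => /predU1P [-> | /sepS].
Qed.

Lemma semi_resolving_unresolved0 (X : finType) (Bs S : {set {set X}}) :
  S \subset Bs -> unresolved S = set0 -> semi_resolving_points Bs S.
Proof.
move=> sub_S U0; split=> // x y neq_xy.
have : (x, y) \notin unresolved S by rewrite U0 inE.
rewrite inE neq_xy /= => /forall_inPn [B SB]; rewrite negbK => sepB.
have BsB := subsetP sub_S B SB.
exists B => // eq_d; move: sepB.
by rewrite /separates /= -(idist_point_block_eq1 x BsB) -(idist_point_block_eq1 y BsB) eq_d eqxx.
Qed.

Lemma order_sqr_bound (v q lam : nat) :
  (q + lam) * (q + lam - 1) = (v - 1) * lam -> 2 * (q + lam) - lam <= v -> 2 <= q ->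
  v <= q * q + q + 1.
Proof.
move=> count union q_ge2.
have [l def_lam] : exists l, lam = l.+1.
  by case: lam count {union} => [/eqP|l _]; [rewrite muln0 muln_eq0; lia | exists l].
have [d def_v] : exists d, v = d + 2 * q + l + 1 by exists (v - (2 * q + l + 1)); lia.
subst lam v.
have sqr_q : q * q = d * l.+1 + q.
  by move: count; rewrite (_ : q + l.+1 - 1 = q + l) ?addnK; lia.
have d_gt0 : 0 < d.
  by case: (posnP d) sqr_q => [->|//]; rewrite mul0n add0n -{3}[q]muln1 => /eqP; rewrite eqn_mul2l; lia.
have := leq_pmull l d_gt0; lia.
Qed.

Section SymmetricDesign.

Variables (X : finType) (Bs : {set {set X}}) (v k lam : nat).
Hypothesis card_points : #|X| = v.
Hypothesis card_blocks : #|Bs| = v.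
Hypothesis block_card : forall B, B \in Bs -> #|B| = k.
Hypothesis pair_blocks :
  forall x y : X, x != y -> #|[set B in Bs | (x \in B) && (y \in B)]| = lam.
Hypothesis order_ge2 : 2 <= k - lam.

Definition blocks_through (x : X) := [set B in Bs | x \in B].

Lemma card_blocks_through_mul (x : X) : #|blocks_through x| * (k - 1) = (v - 1) * lam.
Proof.
have := double_count (fun y => y != x) (fun B => B \in Bs) (fun y B => (x \in B) && (y \in B)).
rewrite (eq_bigr (fun=> lam)) => [|y neq_yx]; last by rewrite pair_blocks // eq_sym.
rewrite sum_nat_const cardC1 card_points -subn1 => ->.
rewrite -sum1dep_card big_distrl big_mkcondr /=; apply: eq_bigr => B BsB.
case: ifP => xB; last first.
  by apply/esym/eqP; rewrite cards_eq0; apply/eqP/setP => y; rewrite !inE /= andbF.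
rewrite mul1n -(block_card BsB) (cardsD1 x B) xB add1n subn1 /=.
by apply: eq_card => y; rewrite !inE.
Qed.

Lemma sum_card_blocks_through : \sum_x #|blocks_through x| = v * k.
Proof.
rewrite (double_count xpredT (fun B => B \in Bs) (fun x B => x \in B)).
rewrite -card_blocks -sum_nat_const; apply: eq_bigr => B BsB.
by rewrite -(block_card BsB); apply: eq_card => y; rewrite inE.
Qed.

Lemma card_blocks_through (x : X) : #|blocks_through x| = k.
Proof.
have k1_gt0 : 0 < k - 1 by lia.
have const y : #|blocks_through y| = #|blocks_through x|.
  by apply/eqP; rewrite -(eqn_pmul2r k1_gt0) !card_blocks_through_mul.
have := sum_card_blocks_through; under eq_bigr do rewrite const.
rewrite sum_nat_const card_points => /eqP; rewrite eqn_mul2l => /predU1P [v0 | /eqP //].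
by move: card_points; rewrite v0 => /card0_eq/(_ x).
Qed.

Lemma card_blocks_through_pair (x y : X) : x != y ->
  #|blocks_through x :&: blocks_through y| = lam.
Proof.
move=> neq_xy; rewrite -(pair_blocks neq_xy).
by apply: eq_card => B; rewrite !inE andbACA andbb.
Qed.

Lemma card_separating (x y : X) : x != y ->
  #|[set B in Bs | (x \in B) != (y \in B)]| = 2 * (k - lam).
Proof.
move=> neq_xy; set A := blocks_through x; set C := blocks_through y.
have -> : [set B in Bs | (x \in B) != (y \in B)] = (A :|: C) :\: (A :&: C).
  by apply/setP => B; rewrite !inE; case: (B \in Bs) (x \in B) (y \in B) => [] [] [].
rewrite cardsD (setIidPr (subset_trans (subsetIl A C) (subsetUl A C))) cardsU.
by rewrite !card_blocks_through card_blocks_through_pair //; lia.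
Qed.

Lemma design_count (x : X) : k * (k - 1) = (v - 1) * lam.
Proof. by rewrite -(card_blocks_through_mul x) card_blocks_through. Qed.

Lemma double_block_size_le (x y : X) : x != y -> 2 * k - lam <= v.
Proof.
move=> neq_xy; rewrite -card_blocks.
have : #|blocks_through x :|: blocks_through y| <= #|Bs|.
  by apply/subset_leq_card/subsetP => B; rewrite !inE => /orP [] /andP [].
by rewrite cardsU !card_blocks_through card_blocks_through_pair //; lia.
Qed.

Lemma exists_two_points : 0 < v -> exists x y : X, x != y.
Proof.
rewrite -card_points => /card_gt0P [x _].
have : 0 < (v - 1) * lam by rewrite -(design_count x) muln_gt0; lia.
rewrite muln_gt0 subn_gt0 -card_points => /andP [/card_gt1P [y [z [_ _ neq_yz]]] _].
by exists y, z.
Qed.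

Lemma double_order_le_points : 0 < v -> 2 * (k - lam) <= v.
Proof.
case/exists_two_points => x [y /double_block_size_le]; lia.
Qed.

Lemma ln_points_le_order : 0 < v -> (ln (INR v) <= INR (k - lam))%R.
Proof.
move=> v_gt0; have [x [y neq_xy]] := exists_two_points v_gt0.
have def_k : k - lam + lam = k by lia.
apply: ln_le_of_le_sqr_add_succ => //; apply: (@order_sqr_bound _ _ lam _ _ order_ge2); rewrite def_k.
  exact: design_count x.
exact: double_block_size_le neq_xy.
Qed.

Lemma sum_card_separated (U : {set X * X}) : (forall p, p \in U -> p.1 != p.2) ->
  \sum_(B in Bs) #|[set p in U | separates B p]| = 2 * (k - lam) * #|U|.
Proof.
move=> offdiag; rewrite (double_count (fun B => B \in Bs) (fun p => p \in U) (@separates X)).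
rewrite mulnC -sum_nat_const; apply: eq_bigr => p Up.
by rewrite -(card_separating (offdiag p Up)); apply: eq_card => B; rewrite !inE.
Qed.

Lemma greedy_step (S : {set {set X}}) : S \subset Bs -> #|S| < v ->
  exists2 B, B \in Bs :\: S &
    v * #|unresolved (B |: S)| <= (v - 2 * (k - lam)) * #|unresolved S|.
Proof.
move=> sub_S card_S; set U := unresolved S.
pose sepU B := #|[set p in U | separates B p]|.
have sepU_S B : B \in S -> sepU B = 0.
  move=> SB; apply/eqP; rewrite cards_eq0; apply/eqP/setP => p; rewrite !inE.
  by apply/negbTE/andP => -[/andP [_ /forall_inP /(_ B SB) /negP]].
have sum_outside : \sum_(B in Bs :\: S) sepU B = 2 * (k - lam) * #|U|.
  rewrite -sum_card_separated => [|p]; last by rewrite inE => /andP [].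
  by rewrite [RHS](big_setID S) /= [X in X + _]big1 ?add0n // => B /setIP [_ /sepU_S].
have [B BsSB ge_avg] : exists2 B, B \in Bs :\: S &
    \sum_(C in Bs :\: S) sepU C <= #|Bs :\: S| * sepU B.
  by apply: exists_ge_average; rewrite cardsD (setIidPr sub_S) card_blocks subn_gt0.
exists B => //.
have split_U : sepU B + #|unresolved (B |: S)| = #|U|.
  rewrite unresolved_setU1 -(cardsID [set p | separates B p] U).
  by congr (_ + _); apply: eq_card => p; rewrite !inE andbC.
have : 2 * (k - lam) * #|U| <= v * sepU B.
  rewrite -sum_outside; apply: leq_trans ge_avg _; rewrite leq_mul2r -card_blocks.
  by rewrite subset_leq_card ?orbT // subsetDl.
rewrite -split_U mulnBl; move: (k - lam) (sepU B) #|unresolved (B |: S)| => q c u'; nia.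
Qed.

Lemma greedy_blocks (j : nat) : j <= v -> exists S : {set {set X}},
  [/\ S \subset Bs, #|S| = j &
      v ^ j * #|unresolved S| <= v * (v - 1) * (v - 2 * (k - lam)) ^ j].
Proof.
elim: j => [|j IH] j_le.
  by exists set0; rewrite sub0set cards0 mul1n muln1 card_unresolved0 card_points.
have [S [sub_S card_S bound_S]] := IH (ltnW j_le).
have card_S_lt : #|S| < v by rewrite card_S.
have [B /setDP [BsB notSB] step] := greedy_step sub_S card_S_lt.
exists (B |: S); split; first by rewrite subUset sub1set BsB.
  by rewrite cardsU1 notSB card_S.
rewrite expnSr -mulnA; apply: leq_trans (leq_mul (leqnn _) step) _.
by rewrite mulnCA expnS [leqRHS]mulnCA leq_mul2l bound_S orbT.
Qed.

Lemma semi_resolving_blocks (N : nat) : N <= v ->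
  v * (v - 1) * (v - 2 * (k - lam)) ^ N < v ^ N ->
  exists2 S : {set {set X}}, #|S| = N & semi_resolving_points Bs S.
Proof.
move=> N_le decay; have [S [sub_S card_S bound_S]] := greedy_blocks N_le.
exists S => //; apply: semi_resolving_unresolved0 => //; apply/eqP; rewrite -cards_eq0 -leqn0.
by have := leq_ltn_trans bound_S decay; rewrite -[X in _ < X]muln1 ltn_mul2l ltnS => /andP [].
Qed.

Lemma exists_semi_resolving_ceil : 0 < v -> exists S : {set {set X}},
  is_ceil (INR v * ln (INR v) / INR (k - lam))%R #|S| /\ semi_resolving_points Bs S.
Proof.
move=> v_gt0; have q_gt0 : 0 < k - lam by lia.
have [r_ge0 r_le_v] := mul_ln_div_bounds v_gt0 q_gt0 (ln_points_le_order v_gt0).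
have [N ceilN N_le_v] := exists_ceil_le r_ge0 r_le_v.
have decay := mul_pred_expn_sub_lt_expn q_gt0 (double_order_le_points v_gt0) (proj2 ceilN).
have [S card_S semi_res] := semi_resolving_blocks N_le_v decay.
by exists S; rewrite card_S.
Qed.

End SymmetricDesign.

Theorem theorem2p5 (X : finType) (Bs : {set {set X}}) (v k lam : nat) :
  symmetric_design Bs v k lam ->
  (2 <= k - lam)%N ->
  exists S : {set {set X}},
    is_ceil (INR v * ln (INR v) / INR (k - lam))%R #|S| /\
    semi_resolving_points Bs S.
Proof.
case=> card_X card_Bs block_card pair_blocks _ order_ge2.
have [v0 | v_gt0] := posnP v; last exact: exists_semi_resolving_ceil.
exists set0; split; first by rewrite v0 cards0 /is_ceil /= Rmult_0_l /Rdiv Rmult_0_l; lra.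
split=> [|x]; first exact: sub0set.
by move: card_X; rewrite v0 => /card0_eq/(_ x).
Qed.
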